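(* Let $p$ be prime, $n\ge2$, and let $A_0,\dots,A_{p^n-1}$ be symmetric $n\times n$ matrices over $\mathbb{Z}_p$ such that the $p^n$ graph-state bases $\mathcal{B}_{A_0},\dots,\mathcal{B}_{A_{p^n-1}}$ together with the computational basis form a complete set of $p^n+1$ mutually unbiased bases of $(\mathbb{C}^p)^{\otimes n}$. Let $X\cup Y=\{1,\dots,n\}$ be a bipartition of the qupits with $|X|=n_X$, $|Y|=n_Y$, and let $\Gamma_i^{(X|Y)}$ be the $n_X\times n_Y$ submatrix of $A_i$ with rows indexed by $X$ and columns by $Y$. Then $$1+\sum_{i=0}^{p^n-1}p^{-\mathrm{rank}(\Gamma_i^{(X|Y)})}=p^{n_X}+p^{n_Y},$$ where ranks are computed over $\mathbb{Z}_p$; equivalently, the average purity $\frac{1}{p^n+1}\big(1+\sum_i p^{-\mathrm{rank}(\Gamma_i^{(X|Y)})}\big)$ of the reduced states on $X$ over one element from each basis equals $\frac{d_X+d_Y}{d_Xd_Y+1}$ with $d_X=p^{n_X}$, $d_Y=p^{n_Y}$.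
   Context: Let $\omega_p=e^{2\pi i/p}$. On $\mathbb{C}^p$ let $|+\rangle=p^{-1/2}\sum_{k}|k\rangle$ and $Z=\sum_k\omega_p^k|k\rangle\langle k|$. On $(\mathbb{C}^p)^{\otimes n}$ define $U_{i,i}=\sum_{k=0}^{1}i^k|k\rangle\langle k|_i$ if $p=2$ and $U_{i,i}=\sum_{k=0}^{p-1}\omega_p^{k(k-1)/2}|k\rangle\langle k|_i$ if $p\ge3$, and for $i\ne j$, $U_{i,j}=\sum_{k,l}\omega_p^{kl}|k\rangle\langle k|_i\otimes|l\rangle\langle l|_j$. For symmetric $A$ over $\mathbb{Z}_p$, $|G_A\rangle=\prod_{i\le j}U_{i,j}^{A_{i,j}}|+\rangle^{\otimes n}$ and $\mathcal{B}_A=\{Z^{m_1}\otimes\cdots\otimes Z^{m_n}|G_A\rangle\}_{m_i\in\mathbb{Z}_p}$. Bases of $\mathbb{C}^d$ are mutually unbiased if all cross overlaps have squared modulus $1/d$; a complete set has $d+1$ such bases. The purity of a reduced state $\rho_X=\mathrm{tr}_Y|\psi\rangle\langle\psi|$ is $\mathrm{tr}(\rho_X^2)$. *)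

From HB Require Import structures.
From mathcomp Require Import all_boot all_order all_algebra all_field.
Set Implicit Arguments. Unset Strict Implicit. Unset Printing Implicit Defensive.
Import Order.TTheory GRing.Theory Num.Theory.
Local Open Scope ring_scope.

(* omega_p = e^{2 pi i / p}.  p.-root (-1) is the p-th root of -1 with minimal
   nonnegative argument, i.e. e^{i pi / p}; its square is e^{2 pi i / p}. *)
Definition omega (p : nat) : algC := (p.-root (-1)) ^+ 2.

Definition label (p n : nat) := {ffun 'I_n -> 'I_p}.

(* Vectors of (C^p)^{\otimes n}, given by their coordinates in the computational basis. *)
Definition qvec (p n : nat) := label p n -> algC.

Definition qbasis (p n : nat) := label p n -> qvec p n.

Definition inner (p n : nat) (u v : qvec p n) : algC :=
  \sum_(k : label p n) (u k)^* * v k.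

(* Diagonal entry of U_{i,j} at computational basis state |k>. *)
Definition Uentry (p n : nat) (i j : 'I_n) (k : label p n) : algC :=
  if i == j then
    (if p == 2%N then 'i ^+ (k i : nat)
     else omega p ^+ (((k i : nat) * (k i).-1) %/ 2))
  else omega p ^+ ((k i : nat) * (k j : nat)).

(* |G_A> = prod_{i<=j} U_{i,j}^{A_{i,j}} |+>^{\otimes n}; all U_{i,j} are diagonal
   in the computational basis and |+>^{\otimes n} = p^{-n/2} sum_k |k>, so the
   coordinate of |G_A> on |k> is p^{-n/2} prod_{i<=j} (U_{i,j}(k))^{A_{i,j}}. *)
Definition graph_state (p n : nat) (A : 'M['F_p]_n) : qvec p n :=
  fun k => (sqrtC (p%:R))^-1 ^+ n *
           \prod_(i : 'I_n) \prod_(j : 'I_n | (i <= j)%N) Uentry i j k ^+ (A i j : nat).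

(* B_A = { Z^{m_1} (x) ... (x) Z^{m_n} |G_A> }_m *)
Definition graph_basis (p n : nat) (A : 'M['F_p]_n) : qbasis p n :=
  fun m k => (\prod_(i : 'I_n) omega p ^+ ((m i : nat) * (k i : nat))) * graph_state A k.

Definition comp_basis (p n : nat) : qbasis p n :=
  fun m k => if m == k then 1 else 0.

Definition orthonormal_basis (p n : nat) (B : qbasis p n) : Prop :=
  forall m m', inner (B m) (B m') = if m == m' then 1 else 0.

Definition mutually_unbiased (p n : nat) (B B' : qbasis p n) : Prop :=
  forall m m', `|inner (B m) (B' m')| ^+ 2 = ((p ^ n)%:R)^-1.

(* A family of bases indexed by a finite type I is a set of #|I| mutually
   unbiased bases: each is an orthonormal basis (#labels = dimension) and
   distinct members are mutually unbiased. *)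
Definition MUB_family (p n : nat) (I : finType) (F : I -> qbasis p n) : Prop :=
  (forall t, orthonormal_basis (F t)) /\
  (forall t t', t != t' -> mutually_unbiased (F t) (F t')).

Definition complete_graph_MUB (p n : nat) (A : 'I_(p ^ n) -> 'M['F_p]_n) : Prop :=
  MUB_family (fun t : option 'I_(p ^ n) =>
                match t with None => @comp_basis p n | Some i => graph_basis (A i) end).

Definition Gamma (F : Type) (n : nat) (X : {set 'I_n}) (M : 'M[F]_n)
  : 'M[F]_(#|X|, #|~: X|) :=
  \matrix_(r < #|X|, c < #|~: X|) M (enum_val r) (enum_val c).

From mathcomp Require Import all_boot all_order all_algebra all_field.
From mathcomp Require Import zify ring.
Import Order.TTheory GRing.Theory Num.Theory.
Set Implicit Arguments. Unset Strict Implicit. Unset Printing Implicit Defensive.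
Local Open Scope ring_scope.

(* Write phi_A(k) for the coordinate of |G_A> on |k> up to normalisation.  Because
   U_{i,j}(k) is a quadratic character of k, phi_A(k + v) = phi_A(k) phi_A(v)
   omega^(k . vA).  Hence if vA = vA' for two symmetric matrices A, A', translating
   the summation index of an overlap <Z^0 G_A | Z^m G_A'> by v multiplies every
   term by one constant c_m; overlaps of mutually unbiased bases are nonzero, so
   c_m = 1 for all m, which forces omega^(v_a) = 1 for every a, i.e. v = 0.  Thus
   for w <> 0 the map i |-> w A_i is injective, hence a bijection onto F_p^n.
   Counting the pairs (u, i) with u Gamma_i = 0 then gives
   sum_i p^(n_X - rank Gamma_i) = p^n + (p^(n_X) - 1) p^(n_X): for u <> 0 the
   condition says that the Y-part of (u, 0) A_i vanishes, which happens for exactly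
   p^(n_X) indices i. *)

Lemma bin2D a b : 'C(a + b, 2) = ('C(a, 2) + 'C(b, 2) + a * b)%N.
Proof.
elim: b => [|b IH]; first by rewrite addn0 bin0n muln0 !addn0.
by rewrite addnS !binS IH !bin1; lia.
Qed.

Lemma bin2_mod p x : odd p -> 'C(x, 2) = 'C(x %% p, 2) %[mod p].
Proof.
move=> p_odd.
have dvd_bin2 q : (p %| 'C(q * p, 2))%N.
  elim: q => [|q IH]; first by rewrite mul0n bin0n.
  rewrite mulSn addnC bin2D (bin2odd p_odd) !dvdn_add //.
    exact: dvdn_mulr.
  exact: dvdn_mull.
rewrite [in LHS](divn_eq x p) bin2D addnAC; apply/eqP.
rewrite eqn_mod_dvd ?leq_addl // addnK dvdn_add //.
exact/dvdn_mulr/dvdn_mull.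
Qed.

Section Omega.
Variable p : nat.
Hypothesis p_prime : prime p.
Let p_gt0 : (0 < p)%N := prime_gt0 p_prime.

Lemma omega_expr_order : omega p ^+ p = 1.
Proof. by rewrite /omega -exprM mulnC exprM rootCK // sqrrN expr1n. Qed.

Lemma omegaX_mod x : omega p ^+ (x %% p) = omega p ^+ x.
Proof. exact: expr_mod omega_expr_order. Qed.

Lemma omegaX_conjK x : (omega p ^+ x)^* * omega p ^+ x = 1.
Proof.
have norm1 : `|omega p| = 1.
  apply/eqP; rewrite -(pexpr_eq1 p_gt0) ?normr_ge0 //.
  by rewrite -normrX omega_expr_order normr1.
by rewrite -normCKC normrX norm1 !expr1n.
Qed.

Lemma omega_prim : omega p != 1 -> p.-primitive_root (omega p).
Proof.
move=> omega_neq1; have [m m_prim m_dvd] := prim_order_exists p_gt0 omega_expr_order.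
case/primeP: p_prime => _ /(_ m m_dvd) /orP[/eqP m1 | /eqP mp].
  by move: (prim_expr_order m_prim); rewrite m1 expr1 => /eqP; rewrite (negbTE omega_neq1).
by move: m_prim; rewrite mp.
Qed.

Lemma omega_bin2_mod x : odd p -> omega p ^+ 'C(x %% p, 2) = omega p ^+ 'C(x, 2).
Proof. by move=> p_odd; rewrite -omegaX_mod -(bin2_mod _ p_odd) omegaX_mod. Qed.

End Omega.

Lemma omega2 : omega 2 = -1.
Proof. by rewrite /omega rootCK. Qed.

Lemma expr_i_add_mod2 a b : (a < 2)%N -> (b < 2)%N ->
  'i ^+ ((a + b) %% 2) = 'i ^+ a * 'i ^+ b * omega 2 ^+ (a * b).
Proof.
rewrite omega2; case: a => [|[|//]] _; case: b => [|[|//]] _;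
  rewrite ?expr0 ?expr1 ?mul1r ?mulr1 //=.
by rewrite -expr2 sqrCi mulN1r opprK.
Qed.

Lemma upper_triangle_bilinear n (B : 'I_n -> 'I_n -> nat) (x y : 'I_n -> nat) :
  (forall i j, B i j = B j i) ->
  (\sum_(i : 'I_n) \sum_(j : 'I_n | i <= j)
     (if i == j then x i * y i else x i * y j + y i * x j) * B i j
   = \sum_i x i * \sum_j B i j * y j)%N.
Proof.
move=> B_sym.
transitivity (\sum_(i : 'I_n) \sum_(j : 'I_n)
  ((i <= j) * (x i * B i j * y j) + (i < j) * (y i * B i j * x j)))%N.
  apply: eq_bigr => i _; rewrite big_mkcond /=; apply: eq_bigr => j _.
  case: (eqVneq i j) => [<-|]; first by rewrite leqnn ltnn; lia.
  by rewrite -val_eqE /=; case: ltngtP; lia.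
rewrite [RHS](eq_bigr (fun i : 'I_n => \sum_(j : 'I_n)
    ((i <= j) * (x i * B i j * y j) + (j < i) * (x i * B i j * y j)))%N); last first.
  by move=> i _; rewrite big_distrr; apply: eq_bigr => j _ /=; case: leqP; lia.
rewrite !(eq_bigr _ (fun i _ => big_split _ _ _ _ _)) !big_split /=; congr (_ + _)%N.
rewrite exchange_big; apply: eq_bigr => i _; apply: eq_bigr => j _.
by rewrite (B_sym j i); lia.
Qed.

Lemma sum_shift_factor_eq1 (T : finType) (R : idomainType) (s : T -> T) (F : T -> R) c :
  injective s -> (forall k, F (s k) = F k * c) -> \sum_k F k != 0 -> c = 1.
Proof.
move=> s_inj Fs sum_neq0; apply: (mulfI sum_neq0); rewrite mulr1 mulr_suml.
by rewrite -(eq_bigr _ (fun k _ => Fs k)); apply/esym/reindex_inj.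
Qed.

Lemma mub_inner_neq0 p n (B B' : qbasis p n) m m' :
  (0 < p)%N -> mutually_unbiased B B' -> inner (B m) (B' m') != 0.
Proof.
move=> p_gt0 mub; apply/eqP => inner0; move: (mub m m').
rewrite inner0 normr0 expr0n /= => /eqP; rewrite eq_sym invr_eq0 pnatr_eq0 expn_eq0.
by rewrite eqn0Ngt p_gt0.
Qed.

Section Graph.
Variables p n : nat.
Hypothesis p_prime : prime p.
Let p_gt0 : (0 < p)%N := prime_gt0 p_prime.

Definition label_add (k v : label p n) : label p n :=
  [ffun i => Ordinal (ltn_pmod (k i + v i) p_gt0)].

Lemma label_add_injl v : injective (label_add ^~ v).
Proof.
move=> k k' /ffunP kv; apply/ffunP => i; apply/val_inj/eqP.
have /eqP := congr1 val (kv i); rewrite !ffunE /= eqn_modDr.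
by rewrite !modn_small.
Qed.

Lemma Uentry_add i j k v :
  Uentry i j (label_add k v) = Uentry i j k * Uentry i j v *
    omega p ^+ (if i == j then k i * v i else k i * v j + v i * k j)%N.
Proof.
rewrite /Uentry !ffunE /=; case: (eqVneq i j) => [eq_ij|_]; last first.
  rewrite -omegaX_mod // modnMml modnMmr omegaX_mod // -!exprD.
  by congr (_ ^+ _); ring.
subst j; case: (eqVneq p 2%N) => [p2|p_neq2].
  have k_lt2 : (k i < 2)%N by rewrite -p2.
  have v_lt2 : (v i < 2)%N by rewrite -p2.
  by move: (expr_i_add_mod2 k_lt2 v_lt2); rewrite -p2.
have p_odd : odd p by case/even_prime: p_prime p_neq2 => ->.
by rewrite !divn2 -!bin2 omega_bin2_mod // bin2D !exprD.
Qed.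

Definition graph_phase (A : 'M['F_p]_n) (k : label p n) : algC :=
  \prod_(i : 'I_n) \prod_(j : 'I_n | (i <= j)%N) Uentry i j k ^+ (A i j : nat).

Lemma graph_phase_add (A : 'M['F_p]_n) k v : A^T = A ->
  graph_phase A (label_add k v) =
  graph_phase A k * graph_phase A v * omega p ^+ (\sum_i k i * \sum_j A i j * v j)%N.
Proof.
move=> A_sym; rewrite -upper_triangle_bilinear; last by move=> i j; rewrite -{1}A_sym mxE.
rewrite -prodrXr /graph_phase -!big_split /=; apply: eq_bigr => i _.
rewrite -prodrXr -!big_split /=; apply: eq_bigr => j _.
by rewrite Uentry_add !exprMn -exprM.
Qed.

Definition label0 : label p n := [ffun => Ordinal p_gt0].

Definition label_unit (a : 'I_n) : label p n :=
  [ffun i => if i == a then Ordinal (prime_gt1 p_prime) else Ordinal p_gt0].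

Definition Zphase (m k : label p n) : algC := \prod_i omega p ^+ (m i * k i).

Lemma Zphase_add m k v : Zphase m (label_add k v) = Zphase m k * Zphase m v.
Proof.
rewrite /Zphase -big_split; apply: eq_bigr => i _ /=.
by rewrite ffunE /= -exprD -omegaX_mod // modnMmr omegaX_mod // mulnDr.
Qed.

Lemma Zphase0 k : Zphase label0 k = 1.
Proof. by rewrite /Zphase big1 // => i _; rewrite ffunE mul0n. Qed.

Lemma Zphase_unit a k : Zphase (label_unit a) k = omega p ^+ k a.
Proof.
rewrite /Zphase (bigD1 a) //= big1 ?mulr1 => [|i /negbTE i_neq_a].
  by rewrite ffunE eqxx mul1n.
by rewrite ffunE i_neq_a mul0n.
Qed.

Lemma graph_basisE (A : 'M['F_p]_n) m k :
  graph_basis A m k = Zphase m k * ((sqrtC p%:R)^-1 ^+ n * graph_phase A k).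
Proof. by []. Qed.

Lemma omega_prim_of_orthonormal (A : 'M['F_p]_n) :
  (0 < n)%N -> orthonormal_basis (graph_basis A) -> p.-primitive_root (omega p).
Proof.
(* If omega were 1, all vectors of a graph basis would coincide. *)
move=> n_gt0 orth; apply: omega_prim => //; apply/eqP => omega1.
pose e := label_unit (Ordinal n_gt0).
have e_neq0 : label0 != e.
  by apply/eqP => /ffunP/(_ (Ordinal n_gt0)); rewrite !ffunE eqxx => /(congr1 val).
have := orth label0 e; rewrite (negbTE e_neq0).
have -> : inner (graph_basis A label0) (graph_basis A e) =
          inner (graph_basis A label0) (graph_basis A label0).
  by apply: eq_bigr => k _; rewrite !graph_basisE Zphase_unit Zphase0 omega1 expr1n.
by rewrite orth eqxx => /eqP; rewrite oner_eq0.
Qed.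

Lemma graph_overlap_add (A A' : 'M['F_p]_n) (m' v k : label p n) :
  A^T = A -> A'^T = A' ->
  (forall i, \sum_j A i j * v j = \sum_j A' i j * v j %[mod p])%N ->
  (graph_basis A label0 (label_add k v))^* * graph_basis A' m' (label_add k v) =
  (graph_basis A label0 k)^* * graph_basis A' m' k *
  ((graph_phase A v)^* * graph_phase A' v * Zphase m' v).
Proof.
move=> A_sym A'_sym Av_eq.
have cross_eq : omega p ^+ (\sum_i k i * \sum_j A i j * v j)%N =
                omega p ^+ (\sum_i k i * \sum_j A' i j * v j)%N.
  rewrite -omegaX_mod // -modn_summ -[in RHS]omegaX_mod // -[in RHS]modn_summ.
  by congr (omega p ^+ (_ %% p)); apply: eq_bigr => i _; rewrite -modnMmr Av_eq modnMmr.
rewrite !graph_basisE !Zphase_add !Zphase0 !mul1r !graph_phase_add // cross_eq.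
set P := omega p ^+ _; have PK : P^* * P = 1 by exact: omegaX_conjK.
have c_real : ((sqrtC p%:R)^-1 ^+ n)^* = (sqrtC p%:R)^-1 ^+ n :> algC.
  by rewrite geC0_conj // exprn_ge0 // invr_ge0 sqrtC_ge0 ler0n.
by rewrite !rmorphM /= c_real -[RHS]mulr1 -PK; ring.
Qed.

Lemma graph_mub_rowsum_congr (A A' : 'M['F_p]_n) (v : label p n) :
  p.-primitive_root (omega p) -> A^T = A -> A'^T = A' ->
  mutually_unbiased (graph_basis A) (graph_basis A') ->
  (forall i, \sum_j A i j * v j = \sum_j A' i j * v j %[mod p])%N -> v = label0.
Proof.
move=> prim A_sym A'_sym mub Av_eq.
have factor1 m' : (graph_phase A v)^* * graph_phase A' v * Zphase m' v = 1.
  apply: (sum_shift_factor_eq1 (@label_add_injl v)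
    (F := fun k => (graph_basis A label0 k)^* * graph_basis A' m' k)).
    by move=> k; apply: graph_overlap_add.
  exact: mub_inner_neq0 p_gt0 mub.
have Zphase1 m' : Zphase m' v = 1.
  have phase1 := factor1 label0; rewrite Zphase0 mulr1 in phase1.
  by move: (factor1 m'); rewrite phase1 mul1r.
apply/ffunP => a; apply/val_inj; rewrite ffunE /=; apply/eqP.
move: (prim_order_dvd prim (v a)); rewrite -(Zphase_unit a) Zphase1 eqxx.
by rewrite /dvdn modn_small.
Qed.

Lemma Fp_val_lt (x : 'F_p) : (x < p)%N.
Proof. by rewrite -[p in (_ < p)%N](Fp_cast p_prime) ltn_ord. Qed.

Definition row_label (w : 'rV['F_p]_n) : label p n :=
  [ffun i => Ordinal (Fp_val_lt (w 0 i))].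

Lemma row_label_eq0 w : row_label w = label0 -> w = 0.
Proof.
move=> /ffunP w0; apply/rowP => i; apply/val_inj.
by have := congr1 val (w0 i); rewrite !ffunE mxE.
Qed.

Lemma rowmul_row_label (B : 'M['F_p]_n) w i : B^T = B ->
  ((w *m B) 0 i : nat) = ((\sum_j B i j * row_label w j) %% p)%N.
Proof.
move=> B_sym; rewrite -val_Fp_nat // natr_sum mxE; congr val.
by apply: eq_bigr => j _; rewrite natrM ffunE !natr_Zp mulrC -{1}B_sym mxE.
Qed.

Lemma graph_mub_rowmul_eq (A A' : 'M['F_p]_n) (w : 'rV['F_p]_n) :
  p.-primitive_root (omega p) -> A^T = A -> A'^T = A' ->
  mutually_unbiased (graph_basis A) (graph_basis A') -> w *m A = w *m A' -> w = 0.
Proof.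
move=> prim A_sym A'_sym mub wA; apply: row_label_eq0.
apply: (graph_mub_rowsum_congr prim A_sym A'_sym mub) => i.
by rewrite -!rowmul_row_label // wA.
Qed.

Lemma complete_graph_MUB_rowmul_inj (A : 'I_(p ^ n) -> 'M['F_p]_n) :
  p.-primitive_root (omega p) -> (forall i, (A i)^T = A i) -> complete_graph_MUB A ->
  forall w : 'rV['F_p]_n, w != 0 -> injective (fun i => w *m A i).
Proof.
move=> prim A_sym [_ mub] w w_neq0 i j wA; apply/eqP.
apply: contraNT w_neq0 => i_neq_j.
by rewrite (graph_mub_rowmul_eq prim (A_sym i) (A_sym j) (mub (Some i) (Some j) _) wA).
Qed.

End Graph.

Section Counting.
Variable F : finFieldType.

Lemma card_rowspace m k (M : 'M[F]_(k, m)) :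
  #|[set w : 'rV[F]_m | (w <= M)%MS]| = (#|F| ^ \rank M)%N.
Proof.
have -> : [set w : 'rV[F]_m | (w <= M)%MS] = [set v *m row_base M | v : 'rV[F]_(\rank M)].
  apply/setP => w; rewrite inE -(eq_row_base M); apply/idP/imsetP.
    by move=> /submxP [D ->]; exists D.
  by move=> [v _ ->]; rewrite submxMl.
rewrite card_imset; last exact: row_free_inj (row_base_free M).
by rewrite cardT -cardE card_mx mul1n.
Qed.

Lemma card_left_kernel m k (B : 'M[F]_(m, k)) :
  #|[set w : 'rV[F]_m | w *m B == 0]| = (#|F| ^ (m - \rank B))%N.
Proof.
rewrite -mxrank_ker -card_rowspace; apply: eq_card => w.
by rewrite !inE sub_kermx.
Qed.

Lemma sum_card_left_kernels (I : finType) a b (M : I -> 'M[F]_(a, b)) c :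
  (forall u : 'rV[F]_a, u != 0 -> #|[set i | u *m M i == 0]| = c) ->
  (\sum_i #|F| ^ (a - \rank (M i)) = #|I| + (#|F| ^ a).-1 * c)%N.
Proof.
move=> card_hits.
have card_sum (T : finType) (P : pred T) : #|[set x | P x]| = (\sum_x P x)%N.
  by rewrite -sum1_card big_mkcond; apply: eq_bigr => x _; rewrite inE; case: (P x).
under eq_bigr do rewrite -card_left_kernel card_sum.
rewrite exchange_big (bigD1 0) //=; congr (_ + _)%N.
  by under eq_bigr do rewrite mul0mx eqxx; rewrite sum1_card.
under eq_bigr => u u_neq0 do rewrite -card_sum (card_hits u u_neq0).
by rewrite sum_nat_const cardC1 card_mx mul1n.
Qed.

End Counting.

Lemma rowsub_mul_colsub1 (F : fieldType) m k (g : 'I_k -> 'I_m) : injective g ->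
  rowsub g (1%:M : 'M[F]_m) *m colsub g 1%:M = 1%:M.
Proof.
move=> g_inj; rewrite -mxsub_mul mul1mx; apply/matrixP => i j.
by rewrite !mxE (inj_eq g_inj).
Qed.

Lemma rank_colsub1 (F : fieldType) m k (g : 'I_k -> 'I_m) : injective g ->
  \rank (colsub g (1%:M : 'M[F]_m)) = k.
Proof.
move=> g_inj; apply/eqP; rewrite eqn_leq rank_leq_col -{1}(mxrank1 F k).
by rewrite -(rowsub_mul_colsub1 F g_inj) mxrankM_maxr.
Qed.

Lemma Gamma_mxsub (F : Type) n (X : {set 'I_n}) (M : 'M[F]_n) :
  Gamma X M = mxsub enum_val enum_val M.
Proof. by []. Qed.

Section RowInjectiveFamily.
Variables (F : finFieldType) (n : nat) (I : finType) (A : I -> 'M[F]_n).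
Hypothesis card_I : #|I| = (#|F| ^ n)%N.
Hypothesis rowmul_inj : forall w : 'rV[F]_n, w != 0 -> injective (fun i => w *m A i).

Lemma card_rowmul_hits (w : 'rV[F]_n) (P : pred 'rV[F]_n) : w != 0 ->
  #|[set i | P (w *m A i)]| = #|[set x | P x]|.
Proof.
move=> w_neq0.
have card_le : (#|{: 'rV[F]_n}| <= #|I|)%N by rewrite card_mx mul1n card_I.
have bij := inj_card_bij (rowmul_inj w_neq0) card_le.
rewrite -(on_card_preimset (onW_bij _ bij)); apply: eq_card => i.
by rewrite !inE.
Qed.

Lemma card_Gamma_hits (X : {set 'I_n}) (u : 'rV[F]_#|X|) : u != 0 ->
  #|[set i | u *m Gamma X (A i) == 0]| = (#|F| ^ #|X|)%N.
Proof.
move=> u_neq0.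
pose fX : 'I_#|X| -> 'I_n := enum_val; pose fY : 'I_#|~: X| -> 'I_n := enum_val.
pose w := u *m rowsub fX 1%:M.
have w_neq0 : w != 0.
  apply: contraNneq u_neq0 => w0.
  rewrite -[u]mulmx1 -(rowsub_mul_colsub1 F (@enum_val_inj _ (mem X))).
  by rewrite mulmxA -/w w0 mul0mx.
have hitsE i : (u *m Gamma X (A i) == 0) = (w *m A i *m colsub fY 1%:M == 0).
  by rewrite Gamma_mxsub -{1}[A i]mul1mx mxsub_mul mulmxA -/w !mulmx_colsub mulmx1.
have -> : [set i | u *m Gamma X (A i) == 0] =
          [set i | (fun x => x *m colsub fY 1%:M == 0) (w *m A i)].
  by apply/setP => i; rewrite !inE hitsE.
rewrite (card_rowmul_hits (fun x => x *m colsub fY 1%:M == 0) w_neq0).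
rewrite card_left_kernel rank_colsub1; last exact: enum_val_inj.
by congr (_ ^ _)%N; have := cardsC X; rewrite card_ord; lia.
Qed.

Lemma sum_card_Gamma_kernels (X : {set 'I_n}) :
  (\sum_i #|F| ^ (#|X| - \rank (Gamma X (A i))) =
   #|F| ^ n + (#|F| ^ #|X|).-1 * #|F| ^ #|X|)%N.
Proof. by rewrite (sum_card_left_kernels (@card_Gamma_hits X)) card_I. Qed.

End RowInjectiveFamily.

Theorem mainTheorem6 (p n : nat) (pp : prime p) (n2 : (2 <= n)%N)
  (A : 'I_(p ^ n) -> 'M['F_p]_n)
  (Asym : forall i, (A i)^T = A i)
  (hMUB : complete_graph_MUB A)
  (X : {set 'I_n}) (hX0 : X != set0) (hXT : X != setT) :
  1 + \sum_(i < p ^ n) ((p%:R : algC) ^- \rank (Gamma X (A i)))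
  = (p ^ #|X|)%:R + (p ^ #|~: X|)%:R.
Proof.
have p_gt0 := prime_gt0 pp.
have i0 : 'I_(p ^ n) by exists 0%N; rewrite expn_gt0 p_gt0.
have prim := omega_prim_of_orthonormal pp (ltnW n2) (hMUB.1 (Some i0)).
have card_I : #|'I_(p ^ n)| = (#|'F_p| ^ n)%N by rewrite card_ord card_Fp.
have := sum_card_Gamma_kernels card_I (complete_graph_MUB_rowmul_inj pp prim Asym hMUB) X.
rewrite card_Fp // => count.
pose P : algC := p%:R; have P_neq0 : P != 0 by rewrite pnatr_eq0 -lt0n.
apply: (mulIf (expf_neq0 #|X| P_neq0)); rewrite -/P mulrDl mul1r.
have -> : (\sum_(i < p ^ n) P ^- \rank (Gamma X (A i))) * P ^+ #|X| =
          (p ^ n + (p ^ #|X|).-1 * p ^ #|X|)%:R.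
  rewrite -count natr_sum mulr_suml; apply: eq_bigr => i _.
  by rewrite natrX expfB_cond ?(negbTE P_neq0) ?rank_leq_row // mulrC.
have -> : (p ^ n = p ^ #|X| * p ^ #|~: X|)%N by rewrite -expnD cardsC card_ord.
by rewrite natrD -subn1 !natrM natrB ?expn_gt0 ?p_gt0 // !natrX /P; ring.
Qed.
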